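(* Let $P$ be a non-constant polynomial with integer coefficients and positive leading coefficient. Then there exists a natural number $n$ such that $P(n)$ is not a practical number.
   Context: A positive integer $N$ is called a practical number if every integer in $[1,N]$ can be expressed as a sum of distinct positive divisors of $N$. *)

From mathcomp Require Import all_boot all_order all_algebra.
Set Implicit Arguments. Unset Strict Implicit. Unset Printing Implicit Defensive.
Import GRing.Theory Num.Theory.

(* N is practical: N >= 1 and every m in [1, N] is a sum of distinct positive
   divisors of N.  A set of distinct divisors is a subsequence of the
   (sorted, duplicate-free) list [divisors N]. *)
Definition practical (N : nat) : Prop :=
  0 < N /\
  forall m : nat, 1 <= m <= N ->
    exists s : seq nat, subseq s (divisors N) /\ sumn s = m.

Definition practicalz (z : int) : Prop :=
  (0 < z)%R /\ practical `|z|%N.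

From mathcomp Require Import all_boot all_order all_algebra.
From mathcomp Require Import zify ring.
Import Order.TTheory GRing.Theory Num.Theory.

Set Implicit Arguments.
Unset Strict Implicit.
Unset Printing Implicit Defensive.

(* Write a := P(0) > 0 and m := sigma(a) + 1.  Along the arithmetic progression
   n = a m! t the values are P(n) = a q with q = 1 + m! k, and q is coprime to
   every integer <= m.  Hence every divisor of P(n) that is at most m divides a,
   so distinct divisors of P(n) summing to m would sum to at most sigma(a) < m.
   Since P is non-constant, some t gives P(n) <> a, i.e. k > 0, and then
   P(n) >= m, so P(n) is not practical.  If P(0) <= 0 then n = 0 already works;
   the sign of the leading coefficient plays no role. *)

Lemma leq_sumn_mem (s : seq nat) x : x \in s -> x <= sumn s.
Proof.
elim: s => //= y s IH; rewrite inE => /orP[/eqP->|/IH]; first exact: leq_addr.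
by move=> le_x_s; apply: leq_trans le_x_s (leq_addl _ _).
Qed.

Lemma leq_sumn_uniq_subset (s t : seq nat) :
  uniq s -> {subset s <= t} -> sumn s <= sumn t.
Proof.
move=> s_uniq s_sub_t; rewrite !sumnE.
apply: (sub_le_big_seq (op:=addn) (le:=leq) leqnn (fun x y => leq_addr y x)).
move=> i; rewrite count_uniq_mem //; case: (boolP (i \in s)) => //= i_s.
by rewrite -has_count; apply/hasP; exists i; rewrite ?s_sub_t //= eqxx.
Qed.

Lemma dvdn_mul_coprime_fact a q m x :
  0 < x <= m -> coprime q m`! -> x %| a * q -> x %| a.
Proof.
case/andP=> x_gt0 le_x_m; rewrite coprime_sym => co_fact_q.
by rewrite Gauss_dvdl // (coprime_dvdl _ co_fact_q) // dvdn_fact ?x_gt0.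
Qed.

Lemma not_practical_mul_coprime a q :
  0 < a -> coprime q (sumn (divisors a)).+1`! -> sumn (divisors a) < a * q ->
  ~ practical (a * q).
Proof.
set m := (sumn (divisors a)).+1 => a_gt0 co_q lt_m_aq [aq_gt0 practical_aq].
have [s [s_sub sum_s]] := practical_aq m lt_m_aq.
suff : sumn s <= sumn (divisors a) by rewrite sum_s ltnn.
apply: leq_sumn_uniq_subset; first exact: subseq_uniq s_sub (divisors_uniq _).
move=> x x_s; have := mem_subseq s_sub x_s; rewrite -dvdn_divisors // => x_dvd.
have x_gt0 : 0 < x by apply: dvdn_gt0 x_dvd.
have le_x_m : x <= m by rewrite -sum_s leq_sumn_mem.
rewrite -dvdn_divisors //.
by apply: dvdn_mul_coprime_fact co_q x_dvd; rewrite x_gt0.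
Qed.

Lemma not_practical_mul_one_add_fact a k : 0 < a -> 0 < k ->
  ~ practical (a * (1 + (sumn (divisors a)).+1`! * k)).
Proof.
set m := (sumn (divisors a)).+1 => a_gt0 k_gt0.
apply: not_practical_mul_coprime => //.
  by rewrite coprime_sym /coprime (addnC 1) mulnC gcdnMDl gcdn1.
have lt_m_fact_k : m < 1 + m`! * k.
  by rewrite add1n ltnS (leq_trans (fact_geq m)) // leq_pmulr.
by rewrite (leq_trans (ltnW lt_m_fact_k)) // leq_pmull.
Qed.

Local Open Scope ring_scope.

Lemma horner_coef0_add (R : comNzRingType) (p : {poly R}) x :
  p.[x] = p.[0] + x * (drop_poly 1 p).[x].
Proof.
rewrite -{1}(poly_take_drop 1 p) hornerD hornerM hornerXn expr1 mulrC.
rewrite horner_coef0 [take_poly 1 p]size1_polyC ?hornerC ?coef_take_poly //.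
exact: leq_trans (size_poly _ _) _.
Qed.

Lemma nonroot_in_seq (R : idomainType) (p : {poly R}) (s : seq R) :
  p != 0 -> uniq s -> (size p <= size s)%N -> exists2 x, x \in s & ~~ root p x.
Proof.
move=> p_neq0 s_uniq le_p_s; apply/hasP; rewrite has_predC.
by apply: contraL le_p_s => all_roots; rewrite -ltnNge max_poly_roots.
Qed.

Lemma horner_mulrn_neq_coef0 (P : {poly int}) (c : nat) :
  (1 < size P)%N -> (0 < c)%N -> exists t : nat, P.[(c * t)%N%:R] != P.[0].
Proof.
move=> P_nonconst c_gt0; set Q := P - P.[0]%:P.
have size_Q : size Q = size P.
  by rewrite size_polyDl // size_polyN (leq_ltn_trans (size_polyC_leq1 _)).
have Q_neq0 : Q != 0 by rewrite -size_poly_eq0 size_Q -lt0n ltnW.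
set s := [seq (c * t)%N%:R : int | t <- iota 0 (size P)].
have s_uniq : uniq s.
  rewrite map_inj_uniq ?iota_uniq // => t1 t2 /eqP.
  by rewrite eqr_nat eqn_pmul2l // => /eqP.
have le_Q_s : (size Q <= size s)%N by rewrite size_map size_iota size_Q.
have [x /mapP[t _ ->]] := nonroot_in_seq Q_neq0 s_uniq le_Q_s.
by rewrite /root hornerD hornerN hornerC subr_eq0; exists t.
Qed.

Theorem proposition2p1 (P : {poly int}) :
  (1 < size P)%N -> 0 < lead_coef P ->
  exists n : nat, ~ practicalz P.[n%:R].
Proof.
move=> P_nonconst _.
have [P0_le0|P0_gt0] := lerP P.[0] 0.
  by exists 0%N => -[]; rewrite mulr0n ltNge P0_le0.
have [a a_gt0 P0_a] : exists2 a : nat, (0 < a)%N & P.[0] = a%:Z.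
  by exists `|P.[0]|%N; rewrite ?gez0_abs ?ltW // -ltz_nat gez0_abs ?ltW.
set L := (sumn (divisors a)).+1`!.
have aL_gt0 : (0 < a * L)%N by rewrite muln_gt0 a_gt0 fact_gt0.
have [t Pn_neq_a] := horner_mulrn_neq_coef0 P_nonconst aL_gt0.
exists (a * L * t)%N => -[Pn_gt0].
pose y := t%:Z * (drop_poly 1 P).[(a * L * t)%N%:R].
have Pn_eq : P.[(a * L * t)%N%:R] = a%:Z * (1 + L%:Z * y).
  rewrite horner_coef0_add P0_a /y; set D := (drop_poly 1 P).[_].
  by rewrite [((a * L * t)%N)%:R]natrM [((a * L)%N)%:R]natrM !natz; ring.
have y_gt0 : 0 < y.
  have y_neq0 : y != 0.
    apply: contraNneq Pn_neq_a; rewrite Pn_eq P0_a => ->.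
    by rewrite mulr0 addr0 mulr1.
  have : 0 < a%:Z * (1 + L%:Z * y) by rewrite -Pn_eq.
  have : (0 < L)%N := fact_gt0 _.
  nia.
rewrite Pn_eq -[y]gez0_abs ?ltW // -PoszM -PoszD -PoszM absz_nat.
by apply: not_practical_mul_one_add_fact; rewrite // -ltz_nat gez0_abs ?ltW.
Qed.
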